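(* The expected numbers $E^S_n$ of napkinless diners under algorithm $S$ satisfy $E^S_1=E^S_2=0$, $E^S_3=1/2$, $E^S_4=3/4$, and, for all $n\ge 5$, \[ E^S_n=\frac12\left(E^S_{n-1}+E^S_{\lfloor\frac{n+1}{2}\rfloor}+E^S_{\lceil\frac{n+1}{2}\rceil}\right). \]
   Context: Seating model. A circular table has $n\ge 1$ seats, with exactly one napkin between each pair of adjacent seats ($n$ napkins in total). ''Left'' and ''right'' are from the perspective of a seated diner. Diners $1,\dots,n$ arrive in this order and a maitre d' chooses a seat for each. A preference order is $\sigma=(\sigma_1,\dots,\sigma_n)\in\{-1,1\}^n$, where $\sigma_j=+1$ means diner $j$ prefers the napkin on their right and $\sigma_j=-1$ the napkin on their left. When diner $j$ is seated, they take their preferred adjacent napkin if it is still on the table; otherwise the other adjacent napkin if still on the table; otherwise they are napkinless. Label the seats $1,\dots,n$ so that seat $1$ is the seat of diner $1$ and seats $2,3,\dots,n$ follow successively to the right of seat $1$. The ''previous diner'' means the most recently seated diner. Algorithm $S$ (napkin shunning). Seat diner 1 in seat 1. Then repeat: (S1) If all seats are filled, stop. If the seat adjacent to the previous diner on the side opposite to that diner's preference is empty, go to S2; otherwise go to S3. (S2) Seat the next diner in that seat; return to S1. (S3) A gap is a maximal block of consecutive empty seats (these are intervals of seat labels within $2,\dots,n$); take the gap containing the smallest-labelled empty seat, let $i$ be its number of seats, and seat the next diner in the $\lceil i/2\rceil$-th seat of this gap counting from its smallest-labelled seat (which counts as the 1st); return to S1. $\nu_S(\sigma)$ is the number of napkinless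 diners when the $n$ diners with preference order $\sigma$ are seated at the circular table with $n$ seats by algorithm $S$, and $E^S_n=2^{-n}\sum_{\sigma\in\{-1,1\}^n}\nu_S(\sigma)$. *)

From mathcomp Require Import all_boot all_order all_algebra.
Set Implicit Arguments. Unset Strict Implicit. Unset Printing Implicit Defensive.
Import GRing.Theory Num.Theory.

(* Conventions:
   - seats are labelled 1..n; seat (rightS n k) is the seat to the right of k,
     (leftS n k) the seat to the left (cyclically).
   - napkin k (1 <= k <= n) is the napkin between seat k and seat rightS n k;
     so the right napkin of seat k is napkin k, its left napkin is napkin
     (leftS n k).
   - a preference is a bool: true = +1 (prefers right napkin),
     false = -1 (prefers left napkin). *)

Definition rightS (n k : nat) : nat := if k == n then 1 else k.+1.
Definition leftS (n k : nat) : nat := if k == 1 then n else k.-1.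

Definition upd (f : nat -> bool) (k : nat) : nat -> bool :=
  fun x => if x == k then true else f x.

Definition take_napkin (n : nat) (taken : nat -> bool) (s : nat) (b : bool)
  : (nat -> bool) * nat :=
  let pref := if b then s else leftS n s in
  let other := if b then leftS n s else s in
  if ~~ taken pref then (upd taken pref, 0)
  else if ~~ taken other then (upd taken other, 0)
  else (taken, 1).

(* Step S1/S2/S3: choose the seat of the next diner, given the occupied
   seats [occ], the seat p of the previous diner and its preference bp. *)
Definition nextS (n : nat) (occ : nat -> bool) (p : nat) (bp : bool) : nat :=
  let t := if bp then leftS n p else rightS n p in
  if ~~ occ t then t
  else
    (* smallest-labelled empty seat m among 2..n *)
    let m := 2 + find (fun k => ~~ occ k) (iota 2 (n - 1)) in
    (* i = size of the gap (maximal block of empty seats) starting at m *)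
    let i := find occ (iota m (n - m + 1)) in
    m + uphalf i - 1.

Fixpoint runS (n : nat) (prefs : seq bool) (occ taken : nat -> bool)
  (p : nat) (bp : bool) : nat :=
  match prefs with
  | [::] => 0
  | b :: rest =>
      let s := nextS n occ p bp in
      let tm := take_napkin n taken s b in
      tm.2 + runS n rest (upd occ s) tm.1 s b
  end.

Definition nuS (n : nat) (sigma : seq bool) : nat :=
  match sigma with
  | [::] => 0
  | b1 :: rest =>
      let tm := take_napkin n (fun _ => false) 1 b1 in
      tm.2 + runS n rest (upd (fun _ => false) 1) tm.1 1 b1
  end.

Definition ES (n : nat) : rat :=
  (\sum_(sigma : n.-tuple bool) (nuS n sigma)%:R) / (2 ^ n)%:R.

From mathcomp Require Import all_boot all_order all_algebra.
From mathcomp Require Import zify ring.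
Import GRing.Theory Num.Theory.

(** After diner 1 is seated, algorithm S fills the empty seats block by block.
    A chain is a block filled seat after seat from one end, each diner sitting next
    to the previous one; a gap is a block whose two boundary napkins are gone, which
    rule S3 enters at its middle seat.  A diner at the end of a chain either
    continues it (the next diner sits further along) or, with probability 1/2, turns
    the rest of the block into a gap; a diner entering a gap of g >= 3 seats splits
    it into a chain and a gap.  Hence the expected number of napkinless diners is a
    sum over the blocks, with C k for a chain of k seats whose first napkin is still
    on the table, T k for one whose first napkin is gone, and G k for a gap:
    C (k+1) = (C k + G k) / 2,  T (k+1) = (T k + G k) / 2,  G 1 = G 2 = 1, and,
    folding the two splittings of a gap with the recursion for C,
    G g = C (ceil (g/2)) + C (floor (g/2) + 1).  Diner 1 leaves a chain of n - 1
    seats with its first napkin free, so E^S_n = C (n - 1), and the theorem is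
    C (n - 1) = (C (n - 2) + G (n - 2)) / 2. *)

Set Implicit Arguments.
Unset Strict Implicit.
Unset Printing Implicit Defensive.

Local Open Scope ring_scope.

(** * Averages over preference orders *)

Fixpoint avg (k : nat) (F : seq bool -> rat) : rat :=
  if k is k'.+1 then (avg k' (fun t => F (true :: t)) + avg k' (fun t => F (false :: t))) / 2
  else F [::].

Lemma sum_tuple_avg k (F : seq bool -> rat) :
  \sum_(t : k.-tuple bool) F t = (2 ^ k)%:R * avg k F.
Proof.
elim: k F => [|k IH] F.
  by rewrite (big_pred1 [tuple]) ?mul1r // => t; rewrite (tuple0 t); apply/esym/eqP.
have -> : \sum_(t : k.+1.-tuple bool) F t = \sum_(p : bool * k.-tuple bool) F (p.1 :: p.2).
  rewrite (reindex (fun p : bool * k.-tuple bool => [tuple of p.1 :: p.2])) //=.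
  exists (fun t : k.+1.-tuple bool => (thead t, [tuple of behead t])).
    by move=> [b t] _; congr pair; apply: val_inj.
  by move=> [[|x s] //= sz] _; apply: val_inj.
rewrite -(pair_big xpredT xpredT (fun b (t : k.-tuple bool) => F (b :: t))) /=.
rewrite big_bool /= (IH (fun t => F (true :: t))) (IH (fun t => F (false :: t))).
by rewrite expnS natrM; field.
Qed.

Lemma avgS k F :
  avg k.+1 F = (avg k (fun t => F (true :: t)) + avg k (fun t => F (false :: t))) / 2.
Proof. by []. Qed.

Lemma eq_avg k (F G : seq bool -> rat) : F =1 G -> avg k F = avg k G.
Proof.
by elim: k F G => [|k IH] F G eFG /=; rewrite ?eFG // (IH _ (fun t => G (true :: t)))
  ?(IH (fun t => F (false :: t)) (fun t => G (false :: t))).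
Qed.

Lemma avg_addl k (c : rat) F : avg k (fun t => c + F t) = c + avg k F.
Proof.
elim: k c F => [|k IH] c F //=.
by rewrite (IH c (fun t => F (true :: t))) (IH c (fun t => F (false :: t))); field.
Qed.

(** * Expected costs of chains and gaps *)

Definition gap_cost_of (c : nat -> rat) (g : nat) : rat :=
  if g == 0%N then 0 else if (g <= 2)%N then 1 else c g.+1./2 + c (uphalf g.+1).

(* [gap_cost_of c k] consults [c] only below [k.+1], so fuel [k.+1] suffices. *)
Fixpoint chain_cost_fuel (f k : nat) : rat :=
  match f, k with
  | f'.+1, k'.+1 => (chain_cost_fuel f' k' + gap_cost_of (chain_cost_fuel f') k') / 2
  | _, _ => 0
  end.

Lemma chain_cost_fuel_enough f1 f2 k :
  (k < f1)%N -> (k < f2)%N -> chain_cost_fuel f1 k = chain_cost_fuel f2 k.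
Proof.
elim: f1 f2 k => [|f1 IH] [|f2] [|k] //= lt1 lt2.
rewrite (IH f2 k) // /gap_cost_of; case: eqP => // k0; case: ifP => // k2.
by rewrite (IH f2) ?(IH f2 (uphalf k.+1)) //; lia.
Qed.

Definition chain_cost k := chain_cost_fuel k.+1 k.
Definition gap_cost := gap_cost_of chain_cost.

Fixpoint blocked_chain_cost k : rat :=
  match k with
  | 0 => 0
  | 1 => 1
  | k'.+1 => (blocked_chain_cost k' + gap_cost k') / 2
  end.

Lemma chain_cost0 : chain_cost 0 = 0. Proof. by []. Qed.

Lemma chain_costS k : chain_cost k.+1 = (chain_cost k + gap_cost k) / 2.
Proof.
have -> : chain_cost k.+1 =
  (chain_cost_fuel k.+1 k + gap_cost_of (chain_cost_fuel k.+1) k) / 2 by [].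
congr ((_ + _) / 2); rewrite /gap_cost /gap_cost_of.
case: eqP => // k0; case: ifP => // k2.
by rewrite /chain_cost (@chain_cost_fuel_enough k.+1 k.+1./2.+1)
  ?(@chain_cost_fuel_enough k.+1 (uphalf k.+1).+1) //; lia.
Qed.

Lemma chain_cost1 : chain_cost 1 = 0.
Proof. by rewrite chain_costS chain_cost0 /gap_cost /gap_cost_of /=; field. Qed.

Lemma blocked_chain_cost1 : blocked_chain_cost 1 = 1. Proof. by []. Qed.

Lemma gap_cost1 : gap_cost 1 = 1. Proof. by []. Qed.

Lemma gap_cost2 : gap_cost 2 = 1. Proof. by []. Qed.

Lemma blocked_chain_costS k : (0 < k)%N ->
  blocked_chain_cost k.+1 = (blocked_chain_cost k + gap_cost k) / 2.
Proof. by case: k. Qed.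

Lemma gap_cost_large g : (2 < g)%N ->
  gap_cost g = chain_cost g.+1./2 + chain_cost (uphalf g.+1).
Proof.
move=> g2; rewrite /gap_cost /gap_cost_of.
by have [-> ->] : (g == 0%N) = false /\ (g <= 2)%N = false by split; lia.
Qed.

Lemma gap_cost_split g : (2 < g)%N ->
  gap_cost g = ((chain_cost (uphalf g).-1 + gap_cost (g - uphalf g))
              + (chain_cost (g - uphalf g) + gap_cost (uphalf g).-1)) / 2.
Proof.
move=> g3; rewrite gap_cost_large //.
have -> : g.+1./2 = (uphalf g).-1.+1 by lia.
have -> : uphalf g.+1 = (g - uphalf g).+1 by lia.
by rewrite !chain_costS; field.
Qed.

Local Close Scope ring_scope.

(** * Seats, napkins and gaps *)

Lemma updE (f : nat -> bool) k x : upd f k x = (x == k) || f x.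
Proof. by rewrite /upd; case: eqP. Qed.

Lemma upd_self (f : nat -> bool) k : upd f k k.
Proof. by rewrite updE eqxx. Qed.

Lemma upd_mono (f : nat -> bool) k x : f x -> upd f k x.
Proof. by rewrite updE => ->; rewrite orbT. Qed.

Lemma leftS_pred n s : 1 < s -> leftS n s = s.-1.
Proof. by rewrite /leftS; case: eqP => // ->. Qed.

Lemma rightS_succ n s : s < n -> rightS n s = s.+1.
Proof. by rewrite /rightS; case: eqP => // ->; rewrite ltnn. Qed.

Lemma leftS_rightS n r : 0 < r <= n -> leftS n (rightS n r) = r.
Proof. by rewrite /rightS /leftS; case: (r =P n) => [->|]; case: eqP; lia. Qed.

Lemma take_napkinE n (tk : nat -> bool) s b : 1 < s ->
  take_napkin n tk s b =
    let pref := if b then s else s.-1 in let other := if b then s.-1 else s in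
    if ~~ tk pref then (upd tk pref, 0) else if ~~ tk other then (upd tk other, 0)
    else (tk, 1).
Proof. by move=> s1; rewrite /take_napkin leftS_pred. Qed.

Lemma take_napkin_mono n (tk : nat -> bool) s b j : tk j -> (take_napkin n tk s b).1 j.
Proof. by rewrite /take_napkin; do 2?case: ifP => _ //=; apply: upd_mono. Qed.

Lemma take_napkin_new n (tk : nat -> bool) s b j : 1 < s ->
  (take_napkin n tk s b).1 j -> [|| tk j, j == s | j == s.-1].
Proof.
move=> s1; rewrite take_napkinE //=.
have upd_new k : (k == s) || (k == s.-1) -> upd tk k j -> [|| tk j, j == s | j == s.-1].
  by move=> hk; rewrite updE => /orP[/eqP->|->]; rewrite ?hk ?orbT.
by case: b; do 2?case: ifP => _ /=; try by [apply: upd_new; rewrite eqxx ?orbT | move=> ->].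
Qed.

Definition in_gap x (a : nat * nat) := a.1 <= x <= a.2.
Definition gap_len (a : nat * nat) := a.2.+1 - a.1.
Definition proper_gap n (a : nat * nat) := [&& 1 < a.1, a.1 <= a.2 & a.2 <= n].
Definition before (a b : nat * nat) := a.2.+1 < b.1.
Definition interior_free (tk : nat -> bool) l r := forall j, l <= j < r -> tk j = false.
Definition closed_gap (tk : nat -> bool) (a : nat * nat) :=
  [/\ tk a.1.-1, tk a.2 & interior_free tk a.1 a.2].

Definition gap_context n (occ tk : nat -> bool) xs (g : nat * nat) ys :=
  [/\ all (proper_gap n) (xs ++ g :: ys), pairwise before (xs ++ g :: ys),
      forall x, 0 < x <= n -> occ x = ~~ has (in_gap x) (xs ++ g :: ys) &
      forall a, a \in xs ++ ys -> closed_gap tk a].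

Lemma interior_free_upd tk l r l' r' k :
  interior_free tk l r -> l <= l' -> r' <= r -> (k < l') || (r' <= k) ->
  interior_free (upd tk k) l' r'.
Proof. by move=> free ll rr kout j jlr; rewrite updE free ?orbF; [apply/eqP | ]; lia. Qed.

Lemma before_cat_cons xs g ys : pairwise before (xs ++ g :: ys) ->
  [/\ all (fun a => a.2.+1 < g.1) xs, all (fun a => g.2.+1 < a.1) ys,
      pairwise before xs, pairwise before ys & allrel before xs ys].
Proof. by rewrite pairwise_cat allrel_consr /= => /and4P [/andP [? ?] ? ? ?]. Qed.

Section GapContext.

Variables (n : nat) (occ tk : nat -> bool) (xs ys : seq (nat * nat)) (l r : nat).
Hypothesis ctx : gap_context n occ tk xs (l, r) ys.

Lemma context_bounds : [/\ 1 < l, l <= r & r <= n].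
Proof.
by case: ctx => /allP /(_ (l, r)); rewrite mem_cat mem_head orbT => /(_ isT) /and3P.
Qed.

Lemma context_left_gaps x : l <= x.+1 -> has (in_gap x) xs = false.
Proof.
case: ctx => _ /before_cat_cons [/allP xs_lt _ _ _ _] _ _ lx.
by apply/hasP => -[a /xs_lt /=]; rewrite /in_gap; lia.
Qed.

Lemma context_right_gaps x : x <= r.+1 -> has (in_gap x) ys = false.
Proof.
case: ctx => _ /before_cat_cons [_ /allP ys_gt _ _ _] _ _ xr.
by apply/hasP => -[a /ys_gt /=]; rewrite /in_gap; lia.
Qed.

Lemma context_occ x : 0 < x <= n ->
  occ x = ~~ [|| has (in_gap x) xs, l <= x <= r | has (in_gap x) ys].
Proof. by case: ctx => _ _ occE _ /occE ->; rewrite has_cat /= /in_gap. Qed.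

Lemma context_gap_empty x : l <= x <= r -> occ x = false.
Proof.
by move=> xlr; have [? ? ?] := context_bounds; rewrite context_occ ?xlr ?orbT //; lia.
Qed.

Lemma context_left_occupied : occ l.-1.
Proof.
have [? ? ?] := context_bounds.
by rewrite context_occ ?context_left_gaps ?context_right_gaps //=; lia.
Qed.

Lemma context_right_occupied : occ (rightS n r).
Proof.
have [? ? ?] := context_bounds.
have no_gap1 : forall gs, all (proper_gap n) gs -> has (in_gap 1) gs = false.
  by move=> gs /allP gsP; apply/hasP => -[a /gsP]; rewrite /proper_gap /in_gap; lia.
case: (ltnP r n) => [rn|nr]; first rewrite rightS_succ //.
  by rewrite context_occ ?context_left_gaps ?context_right_gaps //=; lia.
have -> : rightS n r = 1 by rewrite /rightS; case: eqP; lia.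
case: ctx => gsP _ occE _; rewrite occE; last lia.
by rewrite no_gap1.
Qed.

End GapContext.

Definition within l r (a : nat * nat) := [&& l <= a.1, a.1 <= a.2 & a.2 <= r].

Definition splits l r s mid :=
  [/\ forall x, has (in_gap x) mid = (l <= x <= r) && (x != s),
      all (within l r) mid, pairwise before mid &
      (\sum_(a <- mid) gap_len a).+1 = gap_len (l, r)].

Local Ltac splits_by_arith :=
  split; [move=> x; rewrite /in_gap /=; case: eqP | rewrite /within /= ?andbT
         | rewrite /= /before /= ?andbT | rewrite ?big_cons ?big_nil /gap_len /=]; lia.

Lemma splits_single l : splits l l l [::].
Proof. by splits_by_arith. Qed.

Lemma splits_first l r : l < r -> splits l r l [:: (l.+1, r)].
Proof. by move=> ?; splits_by_arith. Qed.

Lemma splits_last l r : l < r -> splits l r r [:: (l, r.-1)].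
Proof. by move=> ?; splits_by_arith. Qed.

Lemma splits_inner l r s : l < s < r -> splits l r s [:: (l, s.-1); (s.+1, r)].
Proof. by move=> ?; splits_by_arith. Qed.

(** * Layouts and one seating step *)

(* [Chain xs l r up nf ys]: the next diners fill [l, r] starting from [l] if [up],
   from [r] otherwise, and [nf] tells whether the napkin between the previous diner
   and that seat is still on the table.  The other empty blocks, listed from left
   to right, are closed gaps. *)
Inductive layout :=
  | Idle of seq (nat * nat)
  | Chain of seq (nat * nat) & nat & nat & bool & bool & seq (nat * nat).

Definition gaps L :=
  match L with Idle gs => gs | Chain xs l r _ _ ys => xs ++ (l, r) :: ys end.

Definition closed_gaps L :=
  match L with Idle gs => gs | Chain xs _ _ _ _ ys => xs ++ ys end.

Definition empty_seats L := \sum_(a <- gaps L) gap_len a.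

Definition chain_ok n (occ tk : nat -> bool) p bp L : Prop :=
  match L with
  | Idle _ => occ (if bp then leftS n p else rightS n p) (* S3 seats the next diner *)
  | Chain _ l r up nf _ => interior_free tk l r /\
      if up then [/\ bp = false, p = l.-1, tk l.-1 = ~~ nf & tk r]
      else [/\ bp = true, p = rightS n r, tk r = ~~ nf & tk l.-1]
  end.

Definition describes n (occ tk : nat -> bool) p bp L :=
  [/\ all (proper_gap n) (gaps L), pairwise before (gaps L),
      forall x, 0 < x <= n -> occ x = ~~ has (in_gap x) (gaps L),
      forall a, a \in closed_gaps L -> closed_gap tk a & chain_ok n occ tk p bp L].

Lemma replace_gap_proper n xs l r ys mid :
  all (proper_gap n) (xs ++ (l, r) :: ys) -> all (within l r) mid ->
  all (proper_gap n) (xs ++ mid ++ ys).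
Proof.
rewrite !all_cat /= => /and3P [-> /and3P [/= l1 _ rn] ->] /allP mid_in.
by rewrite andbT; apply/allP => a /mid_in; rewrite /within /proper_gap; lia.
Qed.

Lemma replace_gap_before xs l r ys mid :
  pairwise before (xs ++ (l, r) :: ys) -> all (within l r) mid -> pairwise before mid ->
  pairwise before (xs ++ mid ++ ys).
Proof.
move=> /before_cat_cons [/allP xs_lt /allP ys_gt xs_sorted ys_sorted xs_ys].
move=> /allP mid_in mid_sorted.
rewrite !pairwise_cat allrel_catr xs_sorted ys_sorted mid_sorted xs_ys !andbT /=.
apply/andP; split; apply/allrelP => a a'.
  by move=> /xs_lt /= ? /mid_in; rewrite /within /before; lia.
by move=> /mid_in + /ys_gt /=; rewrite /within /before; lia.
Qed.

Lemma closed_gap_away (tk tk' : nat -> bool) s a :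
  (forall j, tk j -> tk' j) -> (forall j, tk' j -> [|| tk j, j == s | j == s.-1]) ->
  a.2.+1 < s \/ s.+1 < a.1 -> closed_gap tk a -> closed_gap tk' a.
Proof.
move=> mono new a_far [left right free]; split; rewrite ?mono // => j ja.
by apply/negbTE/negP => /new; rewrite free //=; case: eqP; case: eqP; lia.
Qed.

Lemma seat_in_gap n occ tk xs l r ys s b tk' c mid L k :
  gap_context n occ tk xs (l, r) ys -> l <= s <= r -> splits l r s mid ->
  take_napkin n tk s b = (tk', c) ->
  \sum_(a <- xs ++ (l, r) :: ys) gap_len a = k.+1 ->
  gaps L = xs ++ mid ++ ys ->
  (forall a, a \in closed_gaps L -> a \in xs ++ ys \/ closed_gap tk' a) ->
  chain_ok n (upd occ s) tk' s b L ->
  describes n (upd occ s) tk' s b L /\ empty_seats L = k.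
Proof.
move=> ctx /andP [ls sr] [mid_has mid_in mid_before mid_len] tn len_k gapsL closedL chainL.
have [proper_all before_all _ closed_old] := ctx.
split; last first.
  move: len_k; rewrite /empty_seats gapsL !big_cat big_cons /= -mid_len.
  by rewrite addSn addnS => -[].
split; rewrite ?gapsL.
- exact: replace_gap_proper proper_all mid_in.
- exact: replace_gap_before before_all mid_in mid_before.
- move=> x xn; rewrite updE (context_occ ctx) // !has_cat mid_has.
  case: eqP => [->|]; last by rewrite andbT.
  by rewrite (context_left_gaps ctx (leqW ls)) (context_right_gaps ctx (leqW sr)) /= andbF.
- move=> a /closedL [a_old|//]; apply: (closed_gap_away _ _ _ (closed_old a a_old)).
  + by move=> j tkj; have := take_napkin_mono n s b tkj; rewrite tn.
  + have s1 : 1 < s by have [l1 _ _] := context_bounds ctx; apply: leq_trans ls.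
    by move=> j tkj; apply: (take_napkin_new (n := n) (b := b) s1); rewrite tn.
  + have [/allP xs_lt /allP ys_gt _ _ _] := before_cat_cons before_all.
    move: a_old; rewrite mem_cat => /orP [/xs_lt|/ys_gt] /=; lia.
- by [].
Qed.

Lemma find_iota (P : pred nat) a m j :
  (forall i, i < j -> ~~ P (a + i)) -> (j < m -> P (a + j)) -> j <= m ->
  find P (iota a m) = j.
Proof.
elim: j a m => [|j IH] a m before_j at_j jm.
  by case: m at_j jm => [|m] //= at_j _; rewrite -(addn0 a) at_j.
case: m at_j jm => [|m] //= at_j jm.
rewrite -(addn0 a) (negbTE (before_j 0 _)) // addn0; congr S.
by apply: IH => [i ij|jm'|//]; rewrite addSnnS; [apply: before_j | apply: at_j].
Qed.

Lemma nextS_continue n occ p bp :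
  occ (if bp then leftS n p else rightS n p) = false ->
  nextS n occ p bp = if bp then leftS n p else rightS n p.
Proof. by rewrite /nextS => ->. Qed.

Lemma nextS_first_gap n occ tk l r gs p bp :
  gap_context n occ tk [::] (l, r) gs -> occ (if bp then leftS n p else rightS n p) ->
  nextS n occ p bp = l + uphalf (gap_len (l, r)) - 1.
Proof.
move=> ctx blocked; have [l1 lr rn] := context_bounds ctx.
have occE x : 0 < x <= n -> occ x = ~~ ((l <= x <= r) || has (in_gap x) gs).
  by move=> xn; rewrite (context_occ ctx).
rewrite /nextS blocked /=.
have -> : find (fun k => ~~ occ k) (iota 2 (n - 1)) = l - 2.
  apply: find_iota => [i il|_|]; last lia.
    by rewrite occE ?negbK ?(context_right_gaps ctx); lia.
  by rewrite occE ?(context_right_gaps ctx); lia.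
have -> : find occ (iota (2 + (l - 2)) (n - (2 + (l - 2)) + 1)) = gap_len (l, r).
  rewrite /gap_len /=; apply: find_iota => [i il|lt|]; last lia.
    by rewrite occE; lia.
  rewrite (_ : _ + _ = rightS n r); first exact: context_right_occupied ctx.
  by rewrite rightS_succ; lia.
by congr (_ - _); lia.
Qed.

Local Open Scope ring_scope.

Definition expected L : rat :=
  \sum_(a <- closed_gaps L) gap_cost (gap_len a) +
  if L is Chain _ l r _ nf _
  then (if nf then chain_cost else blocked_chain_cost) (gap_len (l, r)) else 0.

Definition step_ok n occ tk p bp L k :=
  let s := nextS n occ p bp in
  exists L1 L0,
  [/\ describes n (upd occ s) (take_napkin n tk s true).1 s true L1 /\ empty_seats L1 = k,
      describes n (upd occ s) (take_napkin n tk s false).1 s false L0 /\ empty_seats L0 = k &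
      expected L = ((take_napkin n tk s true).2%:R + expected L1
                    + ((take_napkin n tk s false).2%:R + expected L0)) / 2].

Local Close Scope ring_scope.

Lemma take_napkin_isolated n (tk : nat -> bool) l b : 1 < l ->
  (take_napkin n tk l b).2 = tk l.-1 && tk l.
Proof. by move=> l1; rewrite take_napkinE //; case: b => /=; case: (tk l); case: (tk l.-1). Qed.

Lemma seat_isolated n occ tk xs l ys b k :
  gap_context n occ tk xs (l, l) ys -> \sum_(a <- xs ++ (l, l) :: ys) gap_len a = k.+1 ->
  describes n (upd occ l) (take_napkin n tk l b).1 l b (Idle (xs ++ ys))
  /\ empty_seats (Idle (xs ++ ys)) = k.
Proof.
move=> ctx len_k; have [l1 _ ln] := context_bounds ctx.
apply: (seat_in_gap ctx _ (splits_single l) (surjective_pairing _) len_k) => //.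
- by rewrite leqnn.
- by move=> a; left.
- case: b => /=; apply: upd_mono; last exact: context_right_occupied ctx.
  by rewrite leftS_pred //; apply: context_left_occupied ctx.
Qed.

Lemma describes_chain_context n occ tk p bp xs l r up nf ys :
  describes n occ tk p bp (Chain xs l r up nf ys) -> gap_context n occ tk xs (l, r) ys.
Proof. by case. Qed.

Lemma closed_gaps_insert (tk : nat -> bool) xs (g : nat * nat) ys : closed_gap tk g ->
  forall a, a \in xs ++ g :: ys -> a \in xs ++ ys \/ closed_gap tk a.
Proof.
move=> g_closed a; rewrite !mem_cat inE => /or3P [a_xs|/eqP->|a_ys]; [left|by right|left].
  by rewrite a_xs.
by rewrite a_ys orbT.
Qed.

Lemma chain_down_step n occ tk p bp xs l r nf ys k :
  describes n occ tk p bp (Chain xs l r false nf ys) ->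
  empty_seats (Chain xs l r false nf ys) = k.+1 ->
  step_ok n occ tk p bp (Chain xs l r false nf ys) k.
Proof.
move=> D len_k; have ctx := describes_chain_context D.
have [l1 lr rn] := context_bounds ctx.
case: D => _ _ _ _ [free [-> -> near far]].
rewrite /step_ok; have -> : nextS n occ (rightS n r) true = r.
  by rewrite nextS_continue leftS_rightS ?(context_gap_empty ctx) ?leqnn ?lr //; lia.
have [lr'|rl] := ltnP l r; last first.
  have er : r = l by lia.
  subst r; rewrite !take_napkin_isolated //.
  exists (Idle (xs ++ ys)), (Idle (xs ++ ys)); split; try exact: seat_isolated ctx len_k.
  by rewrite /expected /= near far /gap_len subSnn; case: (nf); rewrite ?chain_cost1 /=; field.
have inward : tk r.-1 = false by apply: free; lia.
have tn1 : take_napkin n tk r true = (upd tk (if nf then r else r.-1), 0).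
  by rewrite take_napkinE /= ?near ?inward //; [case: (nf) | lia].
have tn0 : take_napkin n tk r false = (upd tk r.-1, 0).
  by rewrite take_napkinE /= ?inward //; lia.
rewrite tn1 tn0 /=.
exists (Chain xs l r.-1 false nf ys), (Idle (xs ++ (l, r.-1) :: ys)); split.
- apply: (seat_in_gap ctx _ (splits_last lr') tn1 len_k) => //; first by rewrite (ltnW lr') leqnn.
    by move=> a; left.
  split.
    by case: (nf); apply: (interior_free_upd free); lia.
  split; rewrite ?updE ?far ?orbT //; first by rewrite rightS_succ; lia.
  by case: (nf); case: eqP; rewrite ?inward //; lia.
- apply: (seat_in_gap ctx _ (splits_last lr') tn0 len_k) => //; first by rewrite (ltnW lr') leqnn.
    apply: closed_gaps_insert; split; rewrite /= ?upd_self ?upd_mono //.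
    by apply: (interior_free_upd free); lia.
  exact: upd_mono (context_right_occupied ctx).
- rewrite /expected /= !big_cat /= big_cons.
  have -> : gap_len (l, r) = (gap_len (l, r.-1)).+1 by rewrite /gap_len /=; lia.
  case: (nf); rewrite ?chain_costS ?blocked_chain_costS /gap_len /=; try lia.
  all: by field.
Qed.

Lemma chain_up_step n occ tk p bp xs l r nf ys k :
  describes n occ tk p bp (Chain xs l r true nf ys) ->
  empty_seats (Chain xs l r true nf ys) = k.+1 ->
  step_ok n occ tk p bp (Chain xs l r true nf ys) k.
Proof.
move=> D len_k; have ctx := describes_chain_context D.
have [l1 lr rn] := context_bounds ctx.
case: D => _ _ _ _ [free [-> -> near far]].
rewrite /step_ok; have -> : nextS n occ l.-1 false = l.
  rewrite nextS_continue rightS_succ ?prednK ?(context_gap_empty ctx) ?leqnn ?lr //; lia.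
have [lr'|rl] := ltnP l r; last first.
  have er : r = l by lia.
  subst r; rewrite !take_napkin_isolated //.
  exists (Idle (xs ++ ys)), (Idle (xs ++ ys)); split; try exact: seat_isolated ctx len_k.
  by rewrite /expected /= near far /gap_len subSnn; case: (nf); rewrite ?chain_cost1 /=; field.
have inward : tk l = false by apply: free; lia.
have tn1 : take_napkin n tk l true = (upd tk l, 0).
  by rewrite take_napkinE /= ?inward //; lia.
have tn0 : take_napkin n tk l false = (upd tk (if nf then l.-1 else l), 0).
  by rewrite take_napkinE //= near inward; case: (nf).
rewrite tn1 tn0 /=.
exists (Idle (xs ++ (l.+1, r) :: ys)), (Chain xs l.+1 r true nf ys); split.
- apply: (seat_in_gap ctx _ (splits_first lr') tn1 len_k) => //; first by rewrite leqnn ltnW.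
    apply: closed_gaps_insert; split; rewrite /= ?upd_self ?upd_mono //.
    by apply: (interior_free_upd free); lia.
  by rewrite /= leftS_pred //; apply: upd_mono (context_left_occupied ctx).
- apply: (seat_in_gap ctx _ (splits_first lr') tn0 len_k) => //; first by rewrite leqnn ltnW.
    by move=> a; left.
  split.
    by case: (nf); apply: (interior_free_upd free); lia.
  split; rewrite ?updE ?far ?orbT //.
  by case: (nf); case: eqP; rewrite ?inward //; lia.
- rewrite /expected /= !big_cat /= big_cons.
  have -> : gap_len (l, r) = (gap_len (l.+1, r)).+1 by rewrite /gap_len /=; lia.
  case: (nf); rewrite ?chain_costS ?blocked_chain_costS /gap_len /=; try lia.
  all: by field.
Qed.

Lemma idle_first_gap n occ tk p bp l r gs :
  describes n occ tk p bp (Idle ((l, r) :: gs)) ->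
  [/\ gap_context n occ tk [::] (l, r) gs, closed_gap tk (l, r) &
      nextS n occ p bp = l + uphalf (r.+1 - l) - 1].
Proof.
case=> proper sorted occE gs_closed blocked.
have ctx : gap_context n occ tk [::] (l, r) gs.
  by split=> // a a_gs; apply: gs_closed; rewrite inE a_gs orbT.
by split=> //; [apply: gs_closed; apply: mem_head | apply: nextS_first_gap ctx blocked].
Qed.

Lemma idle_single_step n occ tk p bp l gs k :
  describes n occ tk p bp (Idle ((l, l) :: gs)) ->
  empty_seats (Idle ((l, l) :: gs)) = k.+1 ->
  step_ok n occ tk p bp (Idle ((l, l) :: gs)) k.
Proof.
rewrite /step_ok => /idle_first_gap [ctx [/= left right _] ->] len_k.
have [l1 _ _] := context_bounds ctx.
rewrite (_ : l + _ - 1 = l) ?take_napkin_isolated ?left ?right //; last lia.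
exists (Idle gs), (Idle gs); split; try exact: seat_isolated ctx len_k.
by rewrite /expected /= big_cons {1}/gap_len /= subSnn gap_cost1; field.
Qed.

Lemma idle_pair_step n occ tk p bp l gs k :
  describes n occ tk p bp (Idle ((l, l.+1) :: gs)) ->
  empty_seats (Idle ((l, l.+1) :: gs)) = k.+1 ->
  step_ok n occ tk p bp (Idle ((l, l.+1) :: gs)) k.
Proof.
rewrite /step_ok => /idle_first_gap [ctx [/= left right free] ->] len_k.
have [l1 _ _] := context_bounds ctx.
rewrite (_ : l + _ - 1 = l); last lia.
have inner : tk l = false by apply: free; lia.
have tn1 : take_napkin n tk l true = (upd tk l, 0) by rewrite take_napkinE //= inner.
have tn0 : take_napkin n tk l false = (upd tk l, 0) by rewrite take_napkinE //= left inner.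
rewrite tn1 tn0 /=.
exists (Idle ((l.+1, l.+1) :: gs)), (Chain [::] l.+1 l.+1 true false gs); split.
- apply: (seat_in_gap ctx _ (splits_first (ltnSn l)) tn1 len_k) => //; first by lia.
    apply: (closed_gaps_insert (xs := [::])).
    by split; rewrite /= ?upd_self ?upd_mono // => j; lia.
  by rewrite /= leftS_pred //; apply: upd_mono (context_left_occupied ctx).
- apply: (seat_in_gap ctx _ (splits_first (ltnSn l)) tn0 len_k) => //; first by lia.
    by move=> a; left.
  by split; [move=> j; lia | split; rewrite ?upd_self ?upd_mono].
- rewrite /expected /= !big_cons.
  have [-> ->] : gap_len (l, l.+1) = 2 /\ gap_len (l.+1, l.+1) = 1 by rewrite /gap_len /=; lia.
  by rewrite gap_cost1 gap_cost2 blocked_chain_cost1; field.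
Qed.

Lemma idle_long_step n occ tk p bp l r gs k : l.+1 < r ->
  describes n occ tk p bp (Idle ((l, r) :: gs)) ->
  empty_seats (Idle ((l, r) :: gs)) = k.+1 ->
  step_ok n occ tk p bp (Idle ((l, r) :: gs)) k.
Proof.
rewrite /step_ok => lr2 /idle_first_gap [ctx [/= left right free] ->] len_k.
have [l1 _ rn] := context_bounds ctx.
set s := l + _ - 1; have ls : l < s < r by rewrite /s; lia.
have [inner inner'] : tk s = false /\ tk s.-1 = false by split; apply: free; lia.
have tn1 : take_napkin n tk s true = (upd tk s, 0) by rewrite take_napkinE /= ?inner //; lia.
have tn0 : take_napkin n tk s false = (upd tk s.-1, 0)
  by rewrite take_napkinE /= ?inner' //; lia.
rewrite tn1 tn0 /=.
exists (Chain [::] l s.-1 false true ((s.+1, r) :: gs)),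
       (Chain [:: (l, s.-1)] s.+1 r true true gs); split.
- apply: (seat_in_gap ctx _ (splits_inner ls) tn1 len_k) => //; first by lia.
    apply: (closed_gaps_insert (xs := [::])); split; rewrite /= ?upd_self ?upd_mono //.
    by apply: (interior_free_upd free); lia.
  split; first by apply: (interior_free_upd free); lia.
  split; rewrite ?updE ?left ?orbT ?inner' //; first by rewrite rightS_succ; lia.
  by case: eqP; lia.
- apply: (seat_in_gap ctx _ (splits_inner ls) tn0 len_k) => //; first by lia.
    apply: (closed_gaps_insert (xs := [::])); split; rewrite /= ?upd_self ?upd_mono //.
    by apply: (interior_free_upd free); lia.
  split; first by apply: (interior_free_upd free); lia.
  by split; rewrite ?updE ?right ?orbT ?inner //; lia.
- rewrite /expected /= !big_cons /gap_len /= (gap_cost_split (_ : 2 < r.+1 - l)); last lia.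
  have -> : s.-1.+1 - l = (uphalf (r.+1 - l)).-1 by rewrite /s; lia.
  have -> : r.+1 - s.+1 = r.+1 - l - uphalf (r.+1 - l) by rewrite /s; lia.
  by field.
Qed.

Lemma idle_step n occ tk p bp gs k :
  describes n occ tk p bp (Idle gs) -> empty_seats (Idle gs) = k.+1 ->
  step_ok n occ tk p bp (Idle gs) k.
Proof.
case: gs => [|[l r] gs] D len_k; first by rewrite /empty_seats big_nil in len_k.
have [/context_bounds [_ lr _] _ _] := idle_first_gap D.
have [er|[er|lr2]] : r = l \/ r = l.+1 \/ l.+1 < r by lia.
- by subst r; apply: idle_single_step D len_k.
- by subst r; apply: idle_pair_step D len_k.
- exact: idle_long_step lr2 D len_k.
Qed.

(** * The expected number of napkinless diners *)

Lemma no_empty_seats n occ tk p bp L :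
  describes n occ tk p bp L -> empty_seats L = 0 -> L = Idle [::].
Proof.
case=> proper _ _ _ _ /eqP; rewrite /empty_seats sum_nat_seq_eq0 => /allP len0.
suff gaps0 : gaps L = [::] by case: L gaps0 {proper len0} => [[]|[]] //.
case: (gaps L) proper len0 => [//|a gs] /andP [a_proper _] /(_ a (mem_head _ _)).
by move: a_proper; rewrite /proper_gap /gap_len; lia.
Qed.

Definition first_layout n b :=
  if n is 0 then Idle [::] else Chain [::] 2 n.+1 (~~ b) true [::].

Lemma describes_first_layout n b :
  describes n.+1 (upd (fun=> false) 1) (take_napkin n.+1 (fun=> false) 1 b).1 1 b
    (first_layout n b).
Proof.
case: n => [|n].
  by split=> //=; [move=> x x1; rewrite updE (_ : x = 1) //; lia | case: b].
split=> //=.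
- by rewrite /proper_gap /= leqnn.
- by move=> x xn; rewrite updE /in_gap /=; case: eqP; lia.
- case: b; rewrite /take_napkin /leftS /=;
    (split=> [j j2|]; first by rewrite updE /=; case: eqP; lia).
    by rewrite /rightS eqxx upd_self updE.
  by rewrite upd_self updE.
Qed.

Lemma empty_seats_first_layout n b : empty_seats (first_layout n b) = n.
Proof. by case: n => [|n]; rewrite /empty_seats /= ?big_seq1 ?big_nil /gap_len //=; lia. Qed.

Lemma expected_first_layout n b : expected (first_layout n b) = chain_cost n.
Proof.
by case: n => [|n]; rewrite /expected /= ?big_nil ?add0r // /gap_len /= subSS subn1.
Qed.

Local Open Scope ring_scope.

Lemma expected_runS n k L occ tk p bp :
  describes n occ tk p bp L -> empty_seats L = k ->
  avg k (fun t => (runS n t occ tk p bp)%:R) = expected L.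
Proof.
elim: k L occ tk p bp => [|k IH] L occ tk p bp D len_k.
  by rewrite (no_empty_seats D len_k) /expected /= big_nil addr0.
have [L1 [L0 [[D1 len1] [D0 len0] ->]]] : step_ok n occ tk p bp L k.
  case: L D len_k => [gs|xs l r [] nf ys]; [exact: idle_step | exact: chain_up_step |
    exact: chain_down_step].
set s := nextS n occ p bp.
have first_diner b : avg k (fun t => (runS n (b :: t) occ tk p bp)%:R) =
    (take_napkin n tk s b).2%:R +
    avg k (fun t => (runS n t (upd occ s) (take_napkin n tk s b).1 s b)%:R).
  by rewrite -avg_addl; apply: eq_avg => t; rewrite /= natrD.
by rewrite avgS !first_diner (IH _ _ _ _ _ D1 len1) (IH _ _ _ _ _ D0 len0).
Qed.

Lemma ES_chain_cost n : ES n.+1 = chain_cost n.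
Proof.
rewrite /ES (@sum_tuple_avg n.+1 (fun s => (nuS n.+1 s)%:R)) mulrC mulrA.
rewrite mulVf ?mul1r ?pnatr_eq0 ?expn_eq0 // avgS.
have first_diner b :
  avg n (fun t => (nuS n.+1 (b :: t))%:R) = expected (first_layout n b).
  rewrite -(expected_runS (describes_first_layout n b) (empty_seats_first_layout n b)).
  by apply: eq_avg => t; rewrite /nuS; case: b.
by rewrite !first_diner !expected_first_layout; field.
Qed.

Theorem proposition5 :
  [/\ ES 1 = 0, ES 2 = 0, ES 3 = 1 / 2, ES 4 = 3 / 4 &
      forall n : nat, (5 <= n)%N ->
        ES n = 1 / 2 * (ES n.-1 + ES (n.+1)./2 + ES (uphalf n.+1))].
Proof.
have ES_pred m : (0 < m)%N -> ES m = chain_cost m.-1.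
  by case: m => // m _; apply: ES_chain_cost.
split; rewrite ?ES_pred // => n n5.
rewrite !ES_pred; try lia.
have -> : n.-1 = (n - 2).+1 by lia.
rewrite chain_costS gap_cost_large; last lia.
have -> : (n.+1./2).-1 = (n - 2).+1./2 by lia.
have -> : (uphalf n.+1).-1 = uphalf (n - 2).+1 by lia.
by rewrite -pred_Sn; field.
Qed.
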